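(* Let $\mathbf A$ be a complete residuated lattice, $I$ a set, and $O\colon A^I\to A^I$ an interior operator satisfying $d^I\cdot O(x)\le O(d^I\cdot x)$ for all $d\in A$ and $x\in A^I$. Then there exist a set $J$ and a fuzzy relation $R\colon I\times J\to A$ such that $O(x)=\rho_R(\phi_R(x))$ for all $x\in A^I$. (One may take $J=\{O(a)\mid a\in A^I\}$ and $R(i,O(a))=O(a)(i)$.)
   Context: A residuated lattice is an algebra $\mathbf A=(A;\vee,\wedge,\cdot,\rightarrow,0,1)$ such that $(A;\vee,\wedge,0,1)$ is a bounded lattice, $(A;\cdot,1)$ is a commutative monoid, and $x\cdot y\le z$ iff $x\le y\rightarrow z$; complete if the lattice reduct is complete. $A^K$ carries componentwise operations and order; $d^K$ is the constant element with value $d\in A$. An interior operator is a monotone $O$ with $O(x)\le x$ and $O(O(x))=O(x)$. For $R\colon I\times J\to A$: $\phi_R\colon A^I\to A^J$, $\phi_R(x)(j)=\bigwedge_{i\in I}(R(i,j)\rightarrow x(i))$; $\rho_R\colon A^J\to A^I$, $\rho_R(y)(i)=\bigvee_{j\in J}(R(i,j)\cdot y(j))$. *)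

Record CompleteResLattice := {
  carrier :> Type;
  le : carrier -> carrier -> Prop;
  join : carrier -> carrier -> carrier;
  meet : carrier -> carrier -> carrier;
  mul : carrier -> carrier -> carrier;
  res : carrier -> carrier -> carrier;
  zero : carrier;
  one : carrier;
  sup : (carrier -> Prop) -> carrier;
  inf : (carrier -> Prop) -> carrier;
  le_refl : forall x, le x x;
  le_trans : forall x y z, le x y -> le y z -> le x z;
  le_antisym : forall x y, le x y -> le y x -> x = y;
  join_ub_l : forall x y, le x (join x y);
  join_ub_r : forall x y, le y (join x y);
  join_least : forall x y z, le x z -> le y z -> le (join x y) z;
  meet_lb_l : forall x y, le (meet x y) x;
  meet_lb_r : forall x y, le (meet x y) y;
  meet_greatest : forall x y z, le z x -> le z y -> le z (meet x y);
  zero_least : forall x, le zero x;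
  one_greatest : forall x, le x one;
  mul_assoc : forall x y z, mul x (mul y z) = mul (mul x y) z;
  mul_comm : forall x y, mul x y = mul y x;
  mul_one : forall x, mul x one = x;
  residuation : forall x y z, le (mul x y) z <-> le x (res y z);
  sup_ub : forall (S : carrier -> Prop) x, S x -> le x (sup S);
  sup_least : forall (S : carrier -> Prop) z,
      (forall x, S x -> le x z) -> le (sup S) z;
  inf_lb : forall (S : carrier -> Prop) x, S x -> le (inf S) x;
  inf_greatest : forall (S : carrier -> Prop) z,
      (forall x, S x -> le z x) -> le z (inf S)
}.

Arguments le {c} _ _.
Arguments mul {c} _ _.
Arguments res {c} _ _.
Arguments sup {c} _.
Arguments inf {c} _.

Definition bigsup {A : CompleteResLattice} {T : Type} (f : T -> A) : A :=
  sup (fun a => exists t, a = f t).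
Definition biginf {A : CompleteResLattice} {T : Type} (f : T -> A) : A :=
  inf (fun a => exists t, a = f t).

Definition le_fun {A : CompleteResLattice} {I : Type} (x y : I -> A) : Prop :=
  forall i, le (x i) (y i).
Definition const {A : CompleteResLattice} (I : Type) (d : A) : I -> A :=
  fun _ => d.
Definition mul_fun {A : CompleteResLattice} {I : Type} (x y : I -> A) : I -> A :=
  fun i => mul (x i) (y i).

Definition interior_operator {A : CompleteResLattice} {I : Type}
  (O : (I -> A) -> (I -> A)) : Prop :=
  (forall x y, le_fun x y -> le_fun (O x) (O y)) /\
  (forall x, le_fun (O x) x) /\
  (forall x, O (O x) = O x).

Definition phi {A : CompleteResLattice} {I J : Type} (R : I -> J -> A)
  (x : I -> A) : J -> A :=
  fun j => biginf (fun i => res (R i j) (x i)).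
Definition rho {A : CompleteResLattice} {I J : Type} (R : I -> J -> A)
  (y : J -> A) : I -> A :=
  fun i => bigsup (fun j => mul (R i j) (y j)).

From Stdlib Require Import FunctionalExtensionality.

(* Take J := A^I and R(i, a) := O a i.  Then phi_R x a is the subsethood degree
   S(O a, x) := /\_i (O a i -> x i), and rho_R (phi_R x) i = \/_a O a i * S(O a, x).
   The term a = x already gives O x i, since O x <= x forces S(O x, x) = 1.
   Conversely d := S(O a, x) satisfies d * O a <= x, so by idempotence and the
   hypothesis on constants d * O a = d * O (O a) <= O (d * O a) <= O x. *)

Section ResiduatedLattice.

Variable A : CompleteResLattice.

Lemma mul_mono_l (a b c : A) : le b c -> le (mul b a) (mul c a).
Proof.
  intro Hbc. apply residuation, le_trans with c; [exact Hbc|].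
  apply residuation, le_refl.
Qed.

Lemma mul_mono_r (a b c : A) : le b c -> le (mul a b) (mul a c).
Proof.
  intro Hbc. rewrite (mul_comm A a b), (mul_comm A a c). now apply mul_mono_l.
Qed.

Lemma mul_one_l (a : A) : mul (one A) a = a.
Proof. now rewrite mul_comm, mul_one. Qed.

Lemma bigsup_ub {T : Type} (f : T -> A) (t : T) : le (f t) (bigsup f).
Proof. apply sup_ub. now exists t. Qed.

Lemma bigsup_least {T : Type} (f : T -> A) (z : A) :
  (forall t, le (f t) z) -> le (bigsup f) z.
Proof. intro Hf. apply sup_least. intros a [t ->]. apply Hf. Qed.

Lemma biginf_lb {T : Type} (f : T -> A) (t : T) : le (biginf f) (f t).
Proof. apply inf_lb. now exists t. Qed.

Lemma biginf_greatest {T : Type} (f : T -> A) (z : A) :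
  (forall t, le z (f t)) -> le z (biginf f).
Proof. intro Hf. apply inf_greatest. intros a [t ->]. apply Hf. Qed.

Definition subsethood {I : Type} (x y : I -> A) : A :=
  biginf (fun i => res (x i) (y i)).

Lemma subsethood_one {I : Type} (x y : I -> A) :
  le_fun x y -> le (one A) (subsethood x y).
Proof.
  intro Hxy. apply biginf_greatest. intro i.
  apply residuation. rewrite mul_one_l. apply Hxy.
Qed.

Lemma mul_subsethood_le {I : Type} (x y : I -> A) :
  le_fun (mul_fun (const I (subsethood x y)) x) y.
Proof.
  intro i. apply residuation.
  exact (biginf_lb (fun k => res (x k) (y k)) i).
Qed.

End ResiduatedLattice.

Arguments subsethood {A I} x y.

Section Representation.

Variables (A : CompleteResLattice) (I : Type) (O : (I -> A) -> (I -> A)).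

Hypothesis O_mono : forall x y, le_fun x y -> le_fun (O x) (O y).
Hypothesis O_contractive : forall x, le_fun (O x) x.
Hypothesis O_idem : forall x, O (O x) = O x.
Hypothesis O_mul_const : forall (d : A) (x : I -> A),
  le_fun (mul_fun (const I d) (O x)) (O (mul_fun (const I d) x)).

Definition interior_relation (i : I) (a : I -> A) : A := O a i.

Lemma le_rho_phi_interior (x : I -> A) :
  le_fun (O x) (rho interior_relation (phi interior_relation x)).
Proof.
  intro i. eapply le_trans; [|apply (bigsup_ub _ _ x)].
  apply le_trans with (mul (O x i) (one A)); [rewrite mul_one; apply le_refl|].
  apply mul_mono_r, subsethood_one, O_contractive.
Qed.

Lemma rho_phi_interior_le (x : I -> A) :
  le_fun (rho interior_relation (phi interior_relation x)) (O x).
Proof.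
  intro i. apply bigsup_least. intro a.
  set (d := subsethood (O a) x).
  change (le (mul (O a i) d) (O x i)). rewrite mul_comm.
  pose proof (O_mul_const d (O a) i) as Hd. unfold mul_fun, const in Hd.
  rewrite O_idem in Hd.
  apply le_trans with (1 := Hd), O_mono, mul_subsethood_le.
Qed.

Lemma interior_rho_phi (x : I -> A) :
  O x = rho interior_relation (phi interior_relation x).
Proof.
  apply functional_extensionality. intro i.
  apply le_antisym; [apply le_rho_phi_interior | apply rho_phi_interior_le].
Qed.

End Representation.

Theorem theorem4 (A : CompleteResLattice) (I : Type)
  (O : (I -> A) -> (I -> A))
  (HO : interior_operator O)
  (Hd : forall (d : A) (x : I -> A),
      le_fun (mul_fun (const I d) (O x)) (O (mul_fun (const I d) x))) :
  exists (J : Type) (R : I -> J -> A),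
    forall x : I -> A, O x = rho R (phi R x).
Proof.
  destruct HO as [O_mono [O_contractive O_idem]].
  exists (I -> A), (interior_relation A I O).
  exact (interior_rho_phi A I O O_mono O_contractive O_idem Hd).
Qed.
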